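(* Consider a finite discounted MDP with $A$ actions, rewards in $[0,1]$, discount $\gamma\in[0,1)$ and initial distribution $\rho$. For $\tau>0$ let $\tilde V^\pi_\tau(\rho):=V^\pi(\rho)+\tau\mathbb{H}(\pi)$ and $\tilde V^*_\tau(\rho):=\max_\pi\tilde V^\pi_\tau(\rho)$. For a fixed softmax policy $\pi_\theta$ and $0<\tau_2<\tau_1$, $$\tilde V^*_{\tau_2}(\rho)-\tilde V^{\pi_\theta}_{\tau_2}(\rho)\le\tilde V^*_{\tau_1}(\rho)-\tilde V^{\pi_\theta}_{\tau_1}(\rho)+\frac{2\tau_1\log A}{1-\gamma}.$$
   Context: $V^\pi(\rho)=\mathbb{E}_{s_0\sim\rho}\mathbb{E}^\pi[\sum_{t\ge0}\gamma^tr(s_t,a_t)]$ and $\mathbb{H}(\pi):=\mathbb{E}_{s_0\sim\rho,a_t\sim\pi(\cdot|s_t),s_{t+1}\sim\mathcal{P}(\cdot|s_t,a_t)}[\sum_{t\ge0}-\gamma^t\log\pi(a_t\mid s_t)]$ (discounted entropy). *)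

From mathcomp Require Import all_boot all_order all_algebra.
From mathcomp Require Import all_classical all_reals all_analysis.
Set Implicit Arguments. Unset Strict Implicit. Unset Printing Implicit Defensive.
Import Order.TTheory GRing.Theory Num.Theory.
Local Open Scope ring_scope.
Local Open Scope classical_set_scope.

Section MDP.
Variables (R : realType) (S A : finType).

(* stationary (Markov, stochastic) policy pi s a = pi(a | s) *)
Definition is_policy (pi : S -> A -> R) : Prop :=
  (forall s a, 0 <= pi s a) /\ (forall s, \sum_(a : A) pi s a = 1).

(* transition kernel P s a s' = P(s' | s, a) *)
Definition is_transition (P : S -> A -> S -> R) : Prop :=
  (forall s a s', 0 <= P s a s') /\ (forall s a, \sum_(s' : S) P s a s' = 1).

Definition is_distribution (rho : S -> R) : Prop :=
  (forall s, 0 <= rho s) /\ \sum_(s : S) rho s = 1.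

(* law of s_t under s_0 ~ rho, a_t ~ pi(.|s_t), s_{t+1} ~ P(.|s_t,a_t) *)
Fixpoint state_dist (P : S -> A -> S -> R) (pi : S -> A -> R) (rho : S -> R)
    (t : nat) : S -> R :=
  match t with
  | 0%N => rho
  | t'.+1 => fun s' => \sum_(s : S) \sum_(a : A)
       state_dist P pi rho t' s * pi s a * P s a s'
  end.

(* E[ sum_t gamma^t f(s_t, a_t) ] *)
Definition disc_sum (P : S -> A -> S -> R) (gamma : R) (rho : S -> R)
    (pi : S -> A -> R) (f : S -> A -> R) : R :=
  limn (fun n => \sum_(0 <= t < n) (gamma ^+ t *
     \sum_(s : S) \sum_(a : A) state_dist P pi rho t s * pi s a * f s a)).

Definition value P (r : S -> A -> R) gamma rho pi : R :=
  disc_sum P gamma rho pi r.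

Definition disc_entropy P gamma rho (pi : S -> A -> R) : R :=
  disc_sum P gamma rho pi (fun s a => - ln (pi s a)).

Definition reg_value P r gamma rho tau pi : R :=
  value P r gamma rho pi + tau * disc_entropy P gamma rho pi.

Definition opt_reg_value P r gamma rho tau : R :=
  sup [set reg_value P r gamma rho tau pi | pi in is_policy].

Definition softmax (theta : S -> A -> R) : S -> A -> R :=
  fun s a => expR (theta s a) / \sum_(a' : A) expR (theta s a').

End MDP.

From mathcomp Require Import all_boot all_order all_algebra.
From mathcomp Require Import all_classical all_reals all_analysis.
From mathcomp Require Import ring lra.
Import Order.TTheory GRing.Theory Num.Theory.
Local Open Scope ring_scope.
Local Open Scope classical_set_scope.

(* Rewards lie in [0, 1] and the per-step entropy of any policy lies in
   [0, ln |A|], so V^pi(rho) and H(pi) lie in [0, 1/(1-gamma)] and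
   [0, ln |A| / (1-gamma)] respectively.  Since H >= 0, the optimal
   regularized value is nondecreasing in tau, hence
   V~*_tau2 - V~*_tau1 <= 0, while the policy term contributes
   (tau1 - tau2) H(pi_theta) <= tau1 ln |A| / (1-gamma), half the allowed slack. *)

Section RealBounds.
Variable R : realType.

Lemma disc_series_bounds (gamma c : R) (w : nat -> R) :
  0 <= gamma < 1 -> (forall t, 0 <= w t <= c) ->
  0 <= limn (fun n => \sum_(0 <= t < n) (gamma ^+ t * w t)) <= c / (1 - gamma).
Proof.
move=> /andP[gamma_ge0 gamma_lt1] w_bounds.
set u := fun n => _.
have term_ge0 t : 0 <= gamma ^+ t * w t.
  by have /andP[w_ge0 _] := w_bounds t; rewrite mulr_ge0 ?exprn_ge0.
have u_homo : {homo u : n m / (n <= m)%N >-> n <= m}.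
  by apply/nondecreasing_seqP => n; rewrite /u big_nat_recr //= lerDl.
have u_le n : u n <= c / (1 - gamma).
  have c_ge0 : 0 <= c by have /andP[w0 wc] := w_bounds 0%N; apply: le_trans wc.
  apply: (@le_trans _ _ (series (geometric c gamma) n)).
    rewrite /series /=; apply: ler_sum_nat => t _ /=.
    by have /andP[_ wc] := w_bounds t; rewrite mulrC ler_wpM2r ?exprn_ge0.
  rewrite geometric_seriesE ?lt_eqF //= ler_pM2r ?invr_gt0 ?subr_gt0 //.
  by rewrite -[leRHS]mulr1 ler_wpM2l // gerDl oppr_le0 exprn_ge0.
have u_cvg : cvgn u.
  by apply: nondecreasing_is_cvgn => //; exists (c / (1 - gamma)) => _ [n _ <-].
apply/andP; split.
  by apply: limr_ge => //; near=> n; have := u_homo 0%N n isT; rewrite /u big_nil.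
by apply: limr_le => //; near=> n; apply: u_le.
Unshelve. all: by end_near.
Qed.

Lemma ln_le_subr1 {x : R} : 0 < x -> ln x <= x - 1.
Proof.
by move=> x_gt0; have := @le_ln1Dx R (x - 1); rewrite subrKC; apply; rewrite ltrBrDl subrr.
Qed.

(* Gibbs' inequality against the uniform distribution on [N] points, one term
   at a time: [ln (1/(pN)) <= 1/(pN) - 1], multiplied by [p]. *)
Lemma mul_neg_ln_le (p N : R) : 0 <= p -> 0 < N ->
  p * - ln p <= p * ln N + N^-1 - p.
Proof.
move=> p_ge0 N_gt0; have [->|p_neq0] := eqVneq p 0.
  by rewrite !mul0r subr0 add0r invr_ge0 ltW.
have p_gt0 : 0 < p by rewrite lt_def p_neq0.
have pN_gt0 : 0 < p^-1 * N^-1 by rewrite mulr_gt0 ?invr_gt0.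
have := ln_le_subr1 pN_gt0.
rewrite lnM ?posrE ?invr_gt0 // !lnV ?posrE // => /(ler_wpM2l p_ge0).
have -> : p * (p^-1 * N^-1 - 1) = N^-1 - p by field; rewrite gt_eqF.
lra.
Qed.

End RealBounds.

Section Policies.
Variables (R : realType) (S A : finType).
Implicit Types (pi : S -> A -> R) (P : S -> A -> S -> R) (rho : S -> R).

Lemma state_dist_is_distribution P pi rho :
  is_transition P -> is_policy pi -> is_distribution rho ->
  forall t, is_distribution (state_dist P pi rho t).
Proof.
move=> [P_ge0 P_sum1] [pi_ge0 pi_sum1] rho_dist.
elim=> [|t IHt] //=; have [d_ge0 d_sum1] := IHt; split.
  by move=> s'; do 2![apply: sumr_ge0 => ? _]; rewrite !mulr_ge0.
rewrite exchange_big -[RHS]d_sum1; apply: eq_bigr => s _.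
rewrite exchange_big -[RHS]mulr1 -(pi_sum1 s) mulr_sumr; apply: eq_bigr => a _.
by rewrite -mulr_sumr P_sum1 mulr1.
Qed.

Lemma dist_policy_mean_bounds (d : S -> R) pi (f : S -> A -> R) c :
  is_distribution d -> (forall s, 0 <= \sum_(a : A) pi s a * f s a <= c) ->
  0 <= \sum_(s : S) \sum_(a : A) d s * pi s a * f s a <= c.
Proof.
move=> [d_ge0 d_sum1] f_bounds.
have -> : \sum_(s : S) \sum_(a : A) d s * pi s a * f s a
        = \sum_(s : S) d s * \sum_(a : A) pi s a * f s a.
  by apply: eq_bigr => s _; rewrite mulr_sumr; apply: eq_bigr => a _; rewrite mulrA.
apply/andP; split.
  by apply: sumr_ge0 => s _; have /andP[? _] := f_bounds s; apply: mulr_ge0.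
rewrite -[leRHS]mul1r -d_sum1 mulr_suml; apply: ler_sum => s _.
by have /andP[_ ?] := f_bounds s; apply: ler_wpM2l.
Qed.

Lemma policy_le1 pi s a : is_policy pi -> pi s a <= 1.
Proof.
move=> [pi_ge0 pi_sum1]; rewrite -(pi_sum1 s) (bigD1 a) //= lerDl.
by apply: sumr_ge0 => b _; apply: pi_ge0.
Qed.

Lemma policy_mean_bounds pi (f : S -> A -> R) s :
  is_policy pi -> (forall a, 0 <= f s a <= 1) ->
  0 <= \sum_(a : A) pi s a * f s a <= 1.
Proof.
move=> [pi_ge0 pi_sum1] f_bounds; apply/andP; split.
  by apply: sumr_ge0 => a _; have /andP[? _] := f_bounds a; apply: mulr_ge0.
rewrite -(pi_sum1 s); apply: ler_sum => a _; have /andP[_ ?] := f_bounds a.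
by rewrite -[leRHS]mulr1; apply: ler_wpM2l.
Qed.

Lemma policy_entropy_bounds (pi : S -> A -> R) s :
  (0 < #|A|)%N -> is_policy pi ->
  0 <= \sum_(a : A) pi s a * - ln (pi s a) <= ln #|A|%:R.
Proof.
move=> A_gt0 pi_policy; have [pi_ge0 pi_sum1] := pi_policy.
set N := (#|A|%:R : R).
have N_gt0 : 0 < N by rewrite ltr0n.
apply/andP; split.
  apply: sumr_ge0 => a _; rewrite mulr_ge0 // oppr_ge0.
  exact/ln_le0/policy_le1.
apply: (@le_trans _ _ (\sum_(a : A) (pi s a * ln N + N^-1 - pi s a))).
  by apply: ler_sum => a _; apply: mul_neg_ln_le.
have sum_ln : \sum_(a : A) pi s a * ln N = ln N by rewrite -mulr_suml pi_sum1 mul1r.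
have sum_inv : \sum_(a : A) N^-1 = 1 by rewrite sumr_const -mulr_natr mulVf ?gt_eqF.
rewrite !big_split /= sum_ln sum_inv sumrN pi_sum1.
lra.
Qed.

Lemma softmax_is_policy (theta : S -> A -> R) :
  (0 < #|A|)%N -> is_policy (softmax theta).
Proof.
case/card_gt0P=> a0 _.
have Z_gt0 s : 0 < \sum_(a : A) expR (theta s a).
  by rewrite (bigD1 a0) //= ltr_pwDl ?expR_gt0 // sumr_ge0 // => a _; rewrite ltW ?expR_gt0.
split=> [s a|s]; first by rewrite divr_ge0 // ltW ?expR_gt0.
by rewrite -mulr_suml mulfV ?gt_eqF.
Qed.

End Policies.

Section RegularizedValue.
Variables (R : realType) (S A : finType).
Variables (P : S -> A -> S -> R) (r : S -> A -> R) (gamma : R) (rho : S -> R).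
Hypotheses (A_gt0 : (0 < #|A|)%N) (P_transition : is_transition P)
  (r_01 : forall s a, 0 <= r s a <= 1) (gamma_01 : 0 <= gamma < 1)
  (rho_distribution : is_distribution rho).

Lemma disc_sum_bounds (pi f : S -> A -> R) c : is_policy pi ->
  (forall s, 0 <= \sum_(a : A) pi s a * f s a <= c) ->
  0 <= disc_sum P gamma rho pi f <= c / (1 - gamma).
Proof.
move=> pi_policy f_bounds; apply: disc_series_bounds => // t.
by apply: dist_policy_mean_bounds => //; apply: state_dist_is_distribution.
Qed.

Lemma value_bounds pi : is_policy pi ->
  0 <= value P r gamma rho pi <= 1 / (1 - gamma).
Proof. by move=> pi_policy; apply: disc_sum_bounds => // s; apply: policy_mean_bounds. Qed.

Lemma disc_entropy_bounds pi : is_policy pi ->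
  0 <= disc_entropy P gamma rho pi <= ln #|A|%:R / (1 - gamma).
Proof. by move=> pi_policy; apply: disc_sum_bounds => // s; apply: policy_entropy_bounds. Qed.

Lemma opt_reg_value_le (tau1 tau2 : R) : 0 <= tau1 -> tau2 <= tau1 ->
  opt_reg_value P r gamma rho tau2 <= opt_reg_value P r gamma rho tau1.
Proof.
move=> tau1_ge0 tau21.
have reg_value_ub : has_ubound [set reg_value P r gamma rho tau1 pi | pi in @is_policy R S A].
  exists (1 / (1 - gamma) + tau1 * (ln #|A|%:R / (1 - gamma))) => _ [pi pi_policy <-].
  have /andP[_ V_le] := value_bounds pi pi_policy.
  have /andP[_ H_le] := disc_entropy_bounds pi pi_policy.
  by rewrite lerD // ler_wpM2l.
have [pi0 pi0_policy] : exists pi, @is_policy R S A pi.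
  by exists (softmax (fun _ _ => 0)); apply: softmax_is_policy.
apply: ge_sup; first by exists (reg_value P r gamma rho tau2 pi0), pi0.
move=> _ [pi pi_policy <-].
apply: (le_trans _ (ub_le_sup reg_value_ub _)); last by exists pi.
have /andP[H_ge0 _] := disc_entropy_bounds pi pi_policy.
by rewrite lerD2l ler_wpM2r.
Qed.

End RegularizedValue.

Theorem lemma20 (R : realType) (S A : finType)
  (P : S -> A -> S -> R) (r : S -> A -> R) (gamma : R) (rho : S -> R)
  (theta : S -> A -> R) (tau1 tau2 : R) :
  (0 < #|A|)%N ->
  is_transition P ->
  (forall s a, 0 <= r s a <= 1) ->
  0 <= gamma < 1 ->
  is_distribution rho ->
  0 < tau2 -> tau2 < tau1 ->
  opt_reg_value P r gamma rho tau2 - reg_value P r gamma rho tau2 (softmax theta)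
  <= opt_reg_value P r gamma rho tau1 - reg_value P r gamma rho tau1 (softmax theta)
     + 2 * tau1 * ln (#|A|%:R) / (1 - gamma).
Proof.
move=> A_gt0 P_transition r_01 gamma_01 rho_distribution tau2_gt0 tau21.
have tau1_gt0 : 0 < tau1 by apply: lt_trans tau21.
have opt_le : opt_reg_value P r gamma rho tau2 <= opt_reg_value P r gamma rho tau1.
  by apply: opt_reg_value_le => //; apply: ltW.
have /andP[H_ge0 H_le] : 0 <= disc_entropy P gamma rho (softmax theta)
                           <= ln #|A|%:R / (1 - gamma).
  by apply: disc_entropy_bounds => //; apply: softmax_is_policy.
rewrite /reg_value -!mulrA; nra.
Qed.
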